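(* For each calculus $\mathsf{S}\in\{\mathsf{S.ConstCKID},\mathsf{S.ConstCKMP},\mathsf{S.ConstCKMPID}\}$: the rules $\mathsf{w_L}$ (from $\Gamma\Rightarrow\Delta$ infer $\Gamma,\varphi\Rightarrow\Delta$), $\mathsf{w_R}$ (from $\Gamma\Rightarrow$ infer $\Gamma\Rightarrow\varphi$) and $\mathsf{c}$ (from $\Gamma,\varphi,\varphi\Rightarrow\Delta$ infer $\Gamma,\varphi\Rightarrow\Delta$) are height-preserving admissible in $\mathsf{S}$, and the rule $\mathsf{cut}$ (from $\Gamma\Rightarrow\varphi$ and $\Gamma',\varphi\Rightarrow\Delta$ infer $\Gamma,\Gamma'\Rightarrow\Delta$) is admissible in $\mathsf{S}$.
   Context: Language $\mathcal{L}$: formulas $\varphi ::= p \mid \bot \mid \varphi\wedge\varphi \mid \varphi\vee\varphi \mid \varphi\to\varphi \mid \varphi \mathrel{\Box\!\!\to} \varphi \mid \varphi \mathrel{\Diamond\!\!\to}\varphi$. A sequent $\Gamma\Rightarrow\Delta$ is a pair of finite multisets with $|\Delta|\le1$; $\varphi\Leftrightarrow\rho$ abbreviates $\varphi\Rightarrow\rho$ and $\rho\Rightarrow\varphi$. Throughout $0\le|\Delta|\le1$, $n\ge0$. Propositional rules (premisses / conclusion): init: $\Gamma,p\Rightarrow p$; $\bot_L$: $\Gamma,\bot\Rightarrow\Delta$; $\wedge_L$: $\Gamma,\varphi,\psi\Rightarrow\Delta$ / $\Gamma,\varphi\wedge\psi\Rightarrow\Delta$; $\wedge_R$: $\Gamma\Rightarrow\varphi$,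 $\Gamma\Rightarrow\psi$ / $\Gamma\Rightarrow\varphi\wedge\psi$; $\vee_L$: $\Gamma,\varphi\Rightarrow\Delta$, $\Gamma,\psi\Rightarrow\Delta$ / $\Gamma,\varphi\vee\psi\Rightarrow\Delta$; $\vee_R^1$: $\Gamma\Rightarrow\varphi$ / $\Gamma\Rightarrow\varphi\vee\psi$; $\vee_R^2$: $\Gamma\Rightarrow\psi$ / $\Gamma\Rightarrow\varphi\vee\psi$; $\to_R$: $\Gamma,\varphi\Rightarrow\psi$ / $\Gamma\Rightarrow\varphi\to\psi$; $\to_L$: $\Gamma,\varphi\to\psi\Rightarrow\varphi$, $\Gamma,\psi\Rightarrow\Delta$ / $\Gamma,\varphi\to\psi\Rightarrow\Delta$. Write $B:=\rho_1\mathrel{\Box\!\!\to}\sigma_1,\dots,\rho_n\mathrel{\Box\!\!\to}\sigma_n$ and $E:=\{\varphi\Leftrightarrow\rho_i\}_{i\le n}$. Conditional rules: $\Box$: $E$, $\sigma_1,\dots,\sigma_n\Rightarrow\psi$ / $\Gamma,B\Rightarrow\varphi\mathrel{\Box\!\!\to}\psi$; $\Diamond$: $E$, $\varphi\Leftrightarrow\eta$, $\sigma_1,\dots,\sigma_n,\psi\Rightarrow\vartheta$ / $\Gamma,B,\varphi\mathrel{\Diamond\!\!\to}\psi\Rightarrow\eta\mathrel{\Diamond\!\!\to}\vartheta$; $\Box\Diamond$: $E$, $\sigma_1,\dots,\sigma_n,\psi\Rightarrow$ / $\Gamma,B,\varphi\mathrel{\Diamond\!\!\to}\psi\Rightarrow\Delta$;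 $\Box^{id}$: $E$, $\sigma_1,\dots,\sigma_n,\varphi\Rightarrow\psi$ / $\Gamma,B\Rightarrow\varphi\mathrel{\Box\!\!\to}\psi$; $\Box\Diamond^{id}$: $E$, $\sigma_1,\dots,\sigma_n,\varphi,\psi\Rightarrow$ / $\Gamma,B,\varphi\mathrel{\Diamond\!\!\to}\psi\Rightarrow\Delta$; $\Diamond^{id}$: $E$, $\varphi\Leftrightarrow\eta$, $\sigma_1,\dots,\sigma_n,\varphi,\psi\Rightarrow\vartheta$ / $\Gamma,B,\varphi\mathrel{\Diamond\!\!\to}\psi\Rightarrow\eta\mathrel{\Diamond\!\!\to}\vartheta$; $\mathsf{mp}_\Box$: $\Gamma,\varphi\mathrel{\Box\!\!\to}\psi\Rightarrow\varphi$, $\Gamma,\varphi\mathrel{\Box\!\!\to}\psi,\psi\Rightarrow\Delta$ / $\Gamma,\varphi\mathrel{\Box\!\!\to}\psi\Rightarrow\Delta$; $\mathsf{mp}_\Diamond$: $\Gamma\Rightarrow\varphi$, $\Gamma\Rightarrow\psi$ / $\Gamma\Rightarrow\varphi\mathrel{\Diamond\!\!\to}\psi$. Calculi: $\mathsf{S.ConstCKID}$ = propositional rules + $\Box^{id}$, $\Diamond^{id}$, $\Box\Diamond^{id}$; $\mathsf{S.ConstCKMP}$ = propositional rules + $\Box$, $\Diamond$, $\Box\Diamond$, $\mathsf{mp}_\Box$, $\mathsf{mp}_\Diamond$; $\mathsf{S.ConstCKMPID}$ = propositional rules + $\Box^{id}$, $\Diamond^{id}$, $\Box\Diamond^{id}$,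 $\mathsf{mp}_\Box$, $\mathsf{mp}_\Diamond$. Height of a derivation: length of its longest branch minus 1. A rule is admissible if its conclusion is derivable whenever its premisses are; height-preserving admissible if moreover the conclusion has a derivation of height at most the maximal height of the given derivations of the premisses. *)

From Stdlib Require Import List Permutation.
Import ListNotations.
Set Implicit Arguments.

Inductive form : Type :=
| Var : nat -> form
| Bot : form
| And : form -> form -> form
| Or  : form -> form -> form
| Imp : form -> form -> form
| BoxArr : form -> form -> form
| DiaArr : form -> form -> form.

Inductive calculus : Type := ConstCKID | ConstCKMP | ConstCKMPID.

Definition has_id (c : calculus) : bool :=
  match c with ConstCKMP => false | _ => true end.
Definition has_mp (c : calculus) : bool :=
  match c with ConstCKID => false | _ => true end.

(* Antecedents are finite multisets, represented by lists up to permutation;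
   succedents have at most one formula, represented by [option form].
   [dh c n G D] : the sequent G => D has a derivation in calculus c of height
   at most n (height = longest branch length minus 1, so axioms have height 0). *)

Definition boxes (l : list (form * form)) : list form :=
  map (fun p => BoxArr (fst p) (snd p)) l.
Definition conseqs (l : list (form * form)) : list form := map snd l.

Inductive dh (c : calculus) : nat -> list form -> option form -> Prop :=
| r_init : forall n G0 G p, Permutation G0 (Var p :: G) ->
    dh c n G0 (Some (Var p))
| r_botL : forall n G0 G D, Permutation G0 (Bot :: G) -> dh c n G0 D
| r_andL : forall n G0 G a b D, Permutation G0 (And a b :: G) ->
    dh c n (a :: b :: G) D -> dh c (S n) G0 D
| r_andR : forall n G a b,
    dh c n G (Some a) -> dh c n G (Some b) -> dh c (S n) G (Some (And a b))
| r_orL : forall n G0 G a b D, Permutation G0 (Or a b :: G) ->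
    dh c n (a :: G) D -> dh c n (b :: G) D -> dh c (S n) G0 D
| r_orR1 : forall n G a b, dh c n G (Some a) -> dh c (S n) G (Some (Or a b))
| r_orR2 : forall n G a b, dh c n G (Some b) -> dh c (S n) G (Some (Or a b))
| r_impR : forall n G a b, dh c n (a :: G) (Some b) -> dh c (S n) G (Some (Imp a b))
| r_impL : forall n G0 G a b D, Permutation G0 (Imp a b :: G) ->
    dh c n (Imp a b :: G) (Some a) -> dh c n (b :: G) D -> dh c (S n) G0 D
(* conditional rules; E = { phi <=> rho_i } given as premisses [phi] => rho_i and [rho_i] => phi *)
| r_box : forall n G0 G (l : list (form * form)) phi psi,
    has_id c = false ->
    Permutation G0 (G ++ boxes l) ->
    (forall p, In p l -> dh c n [phi] (Some (fst p)) /\ dh c n [fst p] (Some phi)) ->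
    dh c n (conseqs l) (Some psi) ->
    dh c (S n) G0 (Some (BoxArr phi psi))
| r_dia : forall n G0 G (l : list (form * form)) phi psi eta theta,
    has_id c = false ->
    Permutation G0 (DiaArr phi psi :: G ++ boxes l) ->
    (forall p, In p l -> dh c n [phi] (Some (fst p)) /\ dh c n [fst p] (Some phi)) ->
    dh c n [phi] (Some eta) -> dh c n [eta] (Some phi) ->
    dh c n (conseqs l ++ [psi]) (Some theta) ->
    dh c (S n) G0 (Some (DiaArr eta theta))
| r_boxdia : forall n G0 G (l : list (form * form)) phi psi D,
    has_id c = false ->
    Permutation G0 (DiaArr phi psi :: G ++ boxes l) ->
    (forall p, In p l -> dh c n [phi] (Some (fst p)) /\ dh c n [fst p] (Some phi)) ->
    dh c n (conseqs l ++ [psi]) None ->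
    dh c (S n) G0 D
| r_box_id : forall n G0 G (l : list (form * form)) phi psi,
    has_id c = true ->
    Permutation G0 (G ++ boxes l) ->
    (forall p, In p l -> dh c n [phi] (Some (fst p)) /\ dh c n [fst p] (Some phi)) ->
    dh c n (conseqs l ++ [phi]) (Some psi) ->
    dh c (S n) G0 (Some (BoxArr phi psi))
| r_dia_id : forall n G0 G (l : list (form * form)) phi psi eta theta,
    has_id c = true ->
    Permutation G0 (DiaArr phi psi :: G ++ boxes l) ->
    (forall p, In p l -> dh c n [phi] (Some (fst p)) /\ dh c n [fst p] (Some phi)) ->
    dh c n [phi] (Some eta) -> dh c n [eta] (Some phi) ->
    dh c n (conseqs l ++ [phi; psi]) (Some theta) ->
    dh c (S n) G0 (Some (DiaArr eta theta))
| r_boxdia_id : forall n G0 G (l : list (form * form)) phi psi D,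
    has_id c = true ->
    Permutation G0 (DiaArr phi psi :: G ++ boxes l) ->
    (forall p, In p l -> dh c n [phi] (Some (fst p)) /\ dh c n [fst p] (Some phi)) ->
    dh c n (conseqs l ++ [phi; psi]) None ->
    dh c (S n) G0 D
| r_mp_box : forall n G0 G phi psi D,
    has_mp c = true ->
    Permutation G0 (BoxArr phi psi :: G) ->
    dh c n (BoxArr phi psi :: G) (Some phi) ->
    dh c n (psi :: BoxArr phi psi :: G) D ->
    dh c (S n) G0 D
| r_mp_dia : forall n G phi psi,
    has_mp c = true ->
    dh c n G (Some phi) -> dh c n G (Some psi) ->
    dh c (S n) G (Some (DiaArr phi psi)).

Definition der (c : calculus) (G : list form) (D : option form) : Prop :=
  exists n, dh c n G D.

(* The
   six conditional rules are one rule in three shapes (box, dia, box-dia), the id-variants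
   adding phi to the antecedent of the main premiss; their context is arbitrary and does not
   occur in their premisses.  Weakening, w_R and contraction are proved by induction on the
   height: context formulas are passed up to the premisses, and a contracted principal
   formula is handled by height-preserving invertibility of the left rules for /\, \/ and
   (right premiss) ->, or, for two equal boxes of a conditional rule, by contraction in its
   main premiss.  Cut is admissible by induction on the cut formula and then on the heights
   of the left and of the right derivation.  In the principal conditional cases the two
   conditional rules merge into one, the equivalence premisses being composed by cuts on
   smaller formulas; when mp_Box or mp_Dia meets a conditional rule, the boxes of the latter
   are discharged one at a time by mp_Box. *)

From Stdlib Require Import List Permutation Lia.
Import ListNotations.
Set Implicit Arguments.

(** * Multisets as lists up to permutation *)

Definition form_eq_dec (x y : form) : {x = y} + {x <> y}.
Proof. repeat decide equality. Defined.

(* Proves a [Permutation] goal over [form] from the [Permutation] hypotheses (also those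
   over the lists of pairs behind [boxes] and [conseqs]) by comparing multiplicities. *)
Ltac perm_solve :=
  repeat match goal with
  | H : @Permutation (form * form) _ _ |- _ =>
      pose proof (Permutation_map (fun p => BoxArr (fst p) (snd p)) H);
      pose proof (Permutation_map snd H); clear H
  end;
  repeat match goal with
  | H : @Permutation form _ _ |- _ => rewrite (Permutation_count_occ form_eq_dec) in H
  end;
  rewrite (Permutation_count_occ form_eq_dec);
  let x := fresh "x" in
  intro x;
  repeat match goal with
  | H : forall y, count_occ _ _ y = count_occ _ _ y |- _ => specialize (H x); revert H
  end;
  unfold boxes, conseqs; rewrite ?map_app, ?map_cons;
  repeat first [rewrite count_occ_app | progress cbn [count_occ fst snd]];
  repeat match goal with
  | |- context [form_eq_dec ?a ?b] => destruct (form_eq_dec a b)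
  end;
  intros; lia.


Lemma in_perm {x : form} {G} : In x G -> exists K, Permutation G (x :: K).
Proof. intros (G1 & G2 & ->)%in_split. exists (G1 ++ G2). perm_solve. Qed.

Lemma perm_cons_cons {X Y : form} {H K} : Permutation (X :: H) (Y :: K) ->
  (X = Y /\ Permutation H K) \/
  (exists M, Permutation K (X :: M) /\ Permutation H (Y :: M)).
Proof.
  intros HP; destruct (form_eq_dec X Y) as [<- | HXY].
  - left; split; [reflexivity | exact (Permutation_cons_inv HP)].
  - right. assert (HX : In X K).
    { destruct (Permutation_in X HP (or_introl eq_refl)); [congruence | assumption]. }
    destruct (in_perm HX) as [M HM]. exists M; split; [exact HM | perm_solve].
Qed.

Lemma perm_cons_app {X : form} {H K L} : Permutation (X :: H) (K ++ L) ->
  (exists M, Permutation K (X :: M) /\ Permutation H (M ++ L)) \/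
  (exists M, Permutation L (X :: M) /\ Permutation H (K ++ M)).
Proof.
  intros HP. destruct (in_app_or K L X (Permutation_in X HP (or_introl eq_refl))) as [HX | HX];
    destruct (in_perm HX) as [M HM]; [left | right]; exists M; split; auto; perm_solve.
Qed.

Lemma perm_dup_cons {X Y : form} {L K} : Permutation (X :: X :: L) (Y :: K) ->
  (X = Y /\ Permutation K (X :: L)) \/
  (exists M, Permutation K (X :: X :: M) /\ Permutation L (Y :: M)).
Proof.
  intros HP; destruct (perm_cons_cons HP) as [[<- HK] | (K1 & HK1 & HL)].
  - left; split; [reflexivity | symmetry; exact HK].
  - destruct (perm_cons_cons HL) as [[<- HM] | (M & HM & HL')].
    + left; split; [reflexivity | perm_solve].
    + right; exists M; split; [perm_solve | exact HL'].
Qed.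

Lemma perm_dup_app {X : form} {L G S} : Permutation (X :: X :: L) (G ++ S) ->
  (exists M, Permutation G (X :: M) /\ Permutation (X :: L) (M ++ S)) \/
  (exists S', Permutation S (X :: X :: S') /\ Permutation L (G ++ S')).
Proof.
  intros HP; destruct (perm_cons_app HP) as [(M & HG & HM) | (M & HS & HM)].
  - left; exists M; split; assumption.
  - destruct (perm_cons_app HM) as [(M' & HG & HM') | (M' & HS' & HM')].
    + left; exists M'; split; [assumption | perm_solve].
    + right; exists M'; split; [perm_solve | assumption].
Qed.

Lemma boxes_cons_inv {X : form} {l M} : Permutation (boxes l) (X :: M) ->
  exists q l', X = BoxArr (fst q) (snd q) /\ Permutation l (q :: l') /\ Permutation M (boxes l').
Proof.
  intros HP. destruct (in_map_iff (fun p => BoxArr (fst p) (snd p)) l X) as [Hin _].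
  destruct Hin as (q & <- & (l1 & l2 & ->)%in_split);
    [symmetry in HP; exact (Permutation_in _ HP (or_introl eq_refl))|].
  exists q, (l1 ++ l2); split; [reflexivity|].
  split; [symmetry; apply Permutation_middle | perm_solve].
Qed.

Lemma uniform_bound {A : Type} (P : nat -> A -> Prop) (l : list A) :
  (forall n m x, n <= m -> P n x -> P m x) ->
  (forall x, In x l -> exists n, P n x) -> exists n, forall x, In x l -> P n x.
Proof.
  intros Hmono; induction l as [|y l IH]; intros Hl; [exists 0; intros _ []|].
  destruct (Hl y (or_introl eq_refl)) as [n1 Hy].
  destruct IH as [n2 H2]; [intros x Hx; apply Hl; right; exact Hx|].
  exists (n1 + n2); intros x [<- | Hx]; [apply (Hmono n1) | apply (Hmono n2)]; auto; lia.
Qed.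

(** * One inference step *)

Definition judgment : Type := list form -> option form -> Prop.

Definition id_ext (c : calculus) (phi : form) : list form :=
  if has_id c then [phi] else [].

Definition interderivable (J : judgment) (a b : form) : Prop :=
  J [a] (Some b) /\ J [b] (Some a).

Definition equiv_premisses (J : judgment) (phi : form) (l : list (form * form)) : Prop :=
  forall p, In p l -> interderivable J phi (fst p).

(* The conditional rule of shape [cond_shape J phi pre ext D succ] has conclusion
   [G, pre, boxes l => D] and main premiss [conseqs l, id_ext c phi, ext => succ]; the
   id-variants of the rules differ from the others only through [id_ext]. *)
Inductive cond_shape (J : judgment) (phi : form) :
  list form -> list form -> option form -> option form -> Prop :=
| shape_box psi : cond_shape J phi [] [] (Some (BoxArr phi psi)) (Some psi)
| shape_dia psi eta theta : interderivable J phi eta ->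
    cond_shape J phi [DiaArr phi psi] [psi] (Some (DiaArr eta theta)) (Some theta)
| shape_boxdia psi D : cond_shape J phi [DiaArr phi psi] [psi] D None.

Inductive cond_rule c (J : judgment) (S : list form) (D : option form) : Prop :=
| cond_intro phi l pre ext succ :
    cond_shape J phi pre ext D succ ->
    Permutation S (pre ++ boxes l) ->
    equiv_premisses J phi l ->
    J (conseqs l ++ id_ext c phi ++ ext) succ ->
    cond_rule c J S D.

Definition left_premisses c (J : judgment) (X : form) (K : list form) (D : option form) : Prop :=
  match X with
  | And a b => J (a :: b :: K) D
  | Or a b => J (a :: K) D /\ J (b :: K) D
  | Imp a b => J (X :: K) (Some a) /\ J (b :: K) D
  | BoxArr a b => has_mp c = true /\ J (X :: K) (Some a) /\ J (b :: X :: K) D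
  | _ => False
  end.

Definition right_premisses c (J : judgment) (G : list form) (A : form) : Prop :=
  match A with
  | And a b => J G (Some a) /\ J G (Some b)
  | Or a b => J G (Some a) \/ J G (Some b)
  | Imp a b => J (a :: G) (Some b)
  | DiaArr a b => has_mp c = true /\ J G (Some a) /\ J G (Some b)
  | _ => False
  end.

(* One inference of calculus [c] whose premisses satisfy [J]: a derivation of height
   [S n] is an axiom or a [rule c (dh c n)] (see [dh_rule] and [dh_cases]). *)
Inductive rule c (J : judgment) (G : list form) (D : option form) : Prop :=
| rule_left X K : Permutation G (X :: K) -> left_premisses c J X K D -> rule c J G D
| rule_right A : D = Some A -> right_premisses c J G A -> rule c J G D
| rule_cond K S : Permutation G (K ++ S) -> cond_rule c J S D -> rule c J G D.

Arguments cond_intro {c J S D phi l pre ext succ}.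
Arguments rule_left {c J G D X K}.
Arguments rule_right {c J G D A}.
Arguments rule_cond {c J G D} K {S}.

Definition axiom (G : list form) (D : option form) : Prop :=
  In Bot G \/ exists p, D = Some (Var p) /\ In (Var p) G.

Lemma cond_rule_perm c J S S' D : cond_rule c J S D -> Permutation S S' -> cond_rule c J S' D.
Proof.
  intros [phi l pre ext succ sh HS HE Hcore] HS'.
  econstructor; [exact sh | rewrite <- HS' | ..]; eassumption.
Qed.

Lemma cond_rule_mono c {J J' : judgment} S D :
  (forall G D', J G D' -> J' G D') -> cond_rule c J S D -> cond_rule c J' S D.
Proof.
  intros HJ [phi l pre ext succ sh HS HE Hcore].
  apply (cond_intro (phi := phi) (l := l) (pre := pre) (ext := ext) (succ := succ)); auto.
  - destruct sh as [| psi eta theta [He1 He2] |]; constructor; try split; auto.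
  - intros p Hp; destruct (HE p Hp); split; auto.
Qed.

Lemma box_notin_pre {J phi pre ext D succ a b M} : cond_shape J phi pre ext D succ ->
  ~ Permutation pre (BoxArr a b :: M).
Proof.
  intros sh HP; apply Permutation_sym, (Permutation_in (BoxArr a b)) in HP; [|left; reflexivity].
  destruct sh; [exact HP | ..]; destruct HP as [HP | []]; discriminate.
Qed.

Lemma perm_two_boxes {J phi pre ext D succ X l S} : cond_shape J phi pre ext D succ ->
  Permutation (X :: X :: S) (pre ++ boxes l) ->
  exists q l', X = BoxArr (fst q) (snd q) /\ Permutation l (q :: q :: l') /\
               Permutation S (pre ++ boxes l').
Proof.
  intros sh HP.
  assert (Hbox : forall M, Permutation (boxes l) (X :: M) -> Permutation (X :: S) (pre ++ M) ->
            exists q l', X = BoxArr (fst q) (snd q) /\ Permutation l (q :: q :: l') /\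
                         Permutation S (pre ++ boxes l')).
  { intros M HB HM; destruct (boxes_cons_inv HB) as (q & l1 & -> & Hl1 & HM1).
    destruct (perm_cons_app HM) as [(M' & Hp & _) | (M' & HM' & HS)];
      [destruct (box_notin_pre sh Hp)|].
    destruct (@boxes_cons_inv (BoxArr (fst q) (snd q)) l1 M') as (q' & l2 & Hq & Hl2 & HM2);
      [perm_solve|].
    assert (q' = q) as ->.
    { destruct q, q'; cbn in Hq; injection Hq as -> ->; reflexivity. }
    exists q, l2; split; [reflexivity | split; [rewrite Hl1, Hl2; reflexivity | perm_solve]]. }
  destruct (perm_cons_app HP) as [(M & Hp & HM) | (M & HB & HM)]; [|exact (Hbox M HB HM)].
  destruct sh; [destruct (Permutation_nil_cons Hp) | ..];
    apply Permutation_length_1_inv in Hp; injection Hp as -> ->;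
    apply Permutation_sym, boxes_cons_inv in HM as (q & _ & Hq & _); discriminate.
Qed.

Lemma cond_rule_in {c J S D X} : cond_rule c J S D -> In X S ->
  (exists a b, X = BoxArr a b) \/ (exists a b, X = DiaArr a b).
Proof.
  intros [phi l pre ext succ sh HS HE Hcore] HX.
  apply (Permutation_in X HS), in_app_or in HX as [HX | HX].
  - destruct sh; cbn in HX; [contradiction | |]; destruct HX as [<- | []]; eauto.
  - apply in_map_iff in HX as (p & <- & _); eauto.
Qed.

Lemma box_in_cond {J phi pre ext D succ a b S l} : cond_shape J phi pre ext D succ ->
  Permutation (BoxArr a b :: S) (pre ++ boxes l) ->
  exists l', Permutation l ((a, b) :: l') /\ Permutation S (pre ++ boxes l').
Proof.
  intros sh HP.
  destruct (perm_cons_app HP) as [(M & Hp & _) | (M & HB & HM)]; [destruct (box_notin_pre sh Hp)|].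
  destruct (boxes_cons_inv HB) as ([a' b'] & l' & Hq & Hl & HM'); injection Hq as -> ->.
  exists l'; split; [exact Hl | perm_solve].
Qed.

Lemma dia_in_cond {J phi pre ext D succ eta theta S l} : cond_shape J phi pre ext D succ ->
  Permutation (DiaArr eta theta :: S) (pre ++ boxes l) ->
  phi = eta /\ pre = [DiaArr eta theta] /\ ext = [theta] /\ Permutation S (boxes l).
Proof.
  intros sh HP; destruct (perm_cons_app HP) as [(M & Hp & HM) | (M & HB & _)].
  - destruct sh as [psi | psi eta' theta' _ | psi D'];
      [destruct (Permutation_nil_cons Hp) | ..];
      apply Permutation_length_1_inv in Hp; injection Hp as -> -> ->; auto.
  - destruct (boxes_cons_inv HB) as (q & _ & Hq & _); discriminate.
Qed.

Lemma cond_rule_contract c J X S D :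
  (forall K K' D', J K D' -> Permutation K K' -> J K' D') ->
  (forall Y K D', J (Y :: Y :: K) D' -> J (Y :: K) D') ->
  cond_rule c J (X :: X :: S) D -> cond_rule c J (X :: S) D.
Proof.
  intros HJ Hcontr [phi l pre ext succ sh HS HE Hcore].
  destruct (perm_two_boxes sh HS) as (q & l' & -> & Hl & HS').
  apply (cond_intro sh (l := q :: l')); [perm_solve | |].
  - intros p Hp; apply HE; apply (Permutation_in p (Permutation_sym Hl)); destruct Hp; cbn; auto.
  - apply (HJ (snd q :: conseqs l' ++ id_ext c phi ++ ext)); [|perm_solve].
    apply Hcontr, (HJ _ _ _ Hcore); perm_solve.
Qed.

(* Every premiss of a left rule adds some formulas [E] to the shared context [K]; the side
   premisses of ->L and mp_Box keep their own succedent. *)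
Lemma left_premisses_map {c} {J J' : judgment} {X K K' D D'} :
  (forall E, J (E ++ K) D -> J' (E ++ K') D') ->
  (forall E d, J (E ++ K) (Some d) -> J' (E ++ K') (Some d)) ->
  left_premisses c J X K D -> left_premisses c J' X K' D'.
Proof.
  intros Hmain Hside; destruct X as [| | a b | a b | a b | a b |]; cbn; try tauto.
  - apply (Hmain [a; b]).
  - intros [H1 H2]; split; [apply (Hmain [a]) | apply (Hmain [b])]; assumption.
  - intros [H1 H2]; split; [apply (Hside [Imp a b]) | apply (Hmain [b])]; assumption.
  - intros (Hc & H1 & H2); split; [exact Hc|].
    split; [apply (Hside [BoxArr a b]) | apply (Hmain [b; BoxArr a b])]; assumption.
Qed.

Lemma left_premisses_ctx {c} {J J' : judgment} {X K K' D} :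
  (forall E d, J (E ++ K) d -> J' (E ++ K') d) ->
  left_premisses c J X K D -> left_premisses c J' X K' D.
Proof. intros HJ; apply left_premisses_map; intros; apply HJ; assumption. Qed.

Lemma right_premisses_ctx {c} {J J' : judgment} {G G' A} :
  (forall E d, J (E ++ G) d -> J' (E ++ G') d) ->
  right_premisses c J G A -> right_premisses c J' G' A.
Proof.
  intros HJ; destruct A as [| | a b | a b | a b | a b | a b]; cbn; try tauto.
  - intros [H1 H2]; split; apply (HJ []); assumption.
  - intros [H1 | H1]; [left | right]; apply (HJ []); assumption.
  - apply (HJ [a]).
  - intros (Hc & H1 & H2); split; [exact Hc | split]; apply (HJ []); assumption.
Qed.

Lemma rule_mono c {J J' : judgment} G D :
  (forall G' D', J G' D' -> J' G' D') -> rule c J G D -> rule c J' G D.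
Proof.
  intros HJ [X K HG Hl | A HA Hr | K S HG HS].
  - exact (rule_left HG (left_premisses_ctx (fun E d => HJ _ d) Hl)).
  - exact (rule_right HA (right_premisses_ctx (fun E d => HJ _ d) Hr)).
  - exact (rule_cond _ HG (cond_rule_mono HJ HS)).
Qed.

Lemma rule_perm c (J : judgment) G G' D :
  (forall G1 G2 D', J G1 D' -> Permutation G1 G2 -> J G2 D') ->
  rule c J G D -> Permutation G G' -> rule c J G' D.
Proof.
  intros HJ [X K HG Hl | A HA Hr | K S HG HS] HG'.
  - apply (rule_left (X := X) (K := K)); [rewrite <- HG'; exact HG | exact Hl].
  - apply (rule_right HA); revert Hr; apply right_premisses_ctx.
    intros E d Hd; apply (HJ _ _ _ Hd); perm_solve.
  - apply (rule_cond K (S := S)); [rewrite <- HG'; exact HG | exact HS].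
Qed.

Lemma rule_weak c (J : judgment) phi G D :
  (forall G1 G2 D', J G1 D' -> Permutation (phi :: G1) G2 -> J G2 D') ->
  rule c J G D -> rule c J (phi :: G) D.
Proof.
  intros HJ [X K HG Hl | A HA Hr | K S HG HS].
  - apply (rule_left (X := X) (K := phi :: K)); [perm_solve|]; revert Hl.
    apply left_premisses_ctx; intros E d Hd; apply (HJ _ _ _ Hd); perm_solve.
  - apply (rule_right HA); revert Hr; apply right_premisses_ctx.
    intros E d Hd; apply (HJ _ _ _ Hd); perm_solve.
  - apply (rule_cond (phi :: K) (S := S)); [perm_solve | exact HS].
Qed.

Lemma rule_wR c (J : judgment) G D phi :
  (forall G', J G' None -> J G' (Some phi)) -> rule c J G D -> D = None -> rule c J G (Some phi).
Proof.
  intros HJ [X K HG Hl | A HA Hr | K S HG [phi0 l pre ext succ sh HS HE Hcore]] HD.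
  - subst D; apply (rule_left HG); revert Hl; apply left_premisses_map; auto.
  - congruence.
  - apply (rule_cond K HG).
    destruct sh; try discriminate HD.
    eapply cond_intro; [apply shape_boxdia | eassumption..].
Qed.

Definition cond_principal c (J : judgment) (X : form) (H : list form) (D : option form) : Prop :=
  exists K S, Permutation H (K ++ S) /\ cond_rule c J (X :: S) D.

Lemma rule_subst {c J J' X Ys Z H D} :
  (forall K D', J K D' -> J' K D') ->
  (forall K D', J K D' -> forall K', Permutation K (X :: K') -> J' (Ys ++ K') D') ->
  (forall K K' D', J K D' -> Permutation K K' -> J K' D') ->
  (forall K K' D', J' K D' -> Permutation K K' -> J' K' D') ->
  rule c J Z D -> Permutation Z (X :: H) ->
  rule c J' (Ys ++ H) D \/ left_premisses c J X H D \/ cond_principal c J X H D.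
Proof.
  intros Hmono Hsubst HJ HJ' [Y K HG Hl | A HA Hr | K S HG HS] HZ.
  - rewrite HZ in HG; destruct (perm_cons_cons HG) as [[<- HK] | (M & HK & HM)].
    + right; left; revert Hl; apply left_premisses_ctx.
      intros E d Hd; apply (HJ _ _ _ Hd); perm_solve.
    + left; apply (rule_left (X := Y) (K := Ys ++ M)); [perm_solve|]; revert Hl.
      apply left_premisses_ctx; intros E d Hd.
      apply (HJ' (Ys ++ E ++ M)); [apply (Hsubst _ _ Hd); perm_solve | perm_solve].
  - left; apply (rule_right HA); revert Hr; apply right_premisses_ctx; intros E d Hd.
    apply (HJ' (Ys ++ E ++ H)); [apply (Hsubst _ _ Hd); perm_solve | perm_solve].
  - rewrite HZ in HG; destruct (perm_cons_app HG) as [(M & HM & HH) | (M & HM & HH)].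
    + left; apply (rule_cond (Ys ++ M) (S := S)); [perm_solve | exact (cond_rule_mono Hmono HS)].
    + right; right; exists K, M; split; [exact HH | exact (cond_rule_perm HS HM)].
Qed.

Lemma left_premisses_contract {c} {J : judgment} {X L D} :
  (forall K K' D', J K D' -> Permutation K K' -> J K' D') ->
  (forall Y K D', J (Y :: Y :: K) D' -> J (Y :: K) D') ->
  (forall a b K D', J (And a b :: K) D' -> J (a :: b :: K) D') ->
  (forall a b K D', J (Or a b :: K) D' -> J (a :: K) D' /\ J (b :: K) D') ->
  (forall a b K D', J (Imp a b :: K) D' -> J (b :: K) D') ->
  left_premisses c J X (X :: L) D -> left_premisses c J X L D.
Proof.
  intros HJ Hcontr Hand Hor Himp.
  assert (Hc : forall Y M K D', J (Y :: Y :: M) D' -> Permutation (Y :: M) K -> J K D')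
    by (intros Y M K D' Hd HK; exact (HJ _ _ _ (Hcontr _ _ _ Hd) HK)).
  destruct X as [| | a b | a b | a b | a b |]; cbn; try tauto.
  - intros H1.
    assert (H2 : J (a :: b :: a :: b :: L) D) by (apply Hand, (HJ _ _ _ H1); perm_solve).
    apply (Hc b (a :: L)); [apply (Hc a (b :: b :: L)); [apply (HJ _ _ _ H2) |] |]; perm_solve.
  - intros [H1 H2].
    assert (Ha : J (a :: a :: L) D) by (apply (Hor a b), (HJ _ _ _ H1); perm_solve).
    assert (Hb : J (b :: b :: L) D) by (apply (Hor a b), (HJ _ _ _ H2); perm_solve).
    split; [apply (Hc a L _ _ Ha) | apply (Hc b L _ _ Hb)]; reflexivity.
  - intros [H1 H2]; split; [apply (Hc _ L _ _ H1); reflexivity|].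
    assert (Hb : J (b :: b :: L) D) by (apply (Himp a b), (HJ _ _ _ H2); perm_solve).
    apply (Hc b L _ _ Hb); reflexivity.
  - intros (Hm & H1 & H2); split; [exact Hm|].
    assert (Hb : J (BoxArr a b :: BoxArr a b :: b :: L) D) by (apply (HJ _ _ _ H2); perm_solve).
    split; [apply (Hc _ L _ _ H1) | apply (Hc _ (b :: L) _ _ Hb)]; perm_solve.
Qed.

Lemma rule_contract {c J X L G0 D} :
  (forall K K' D', J K D' -> Permutation K K' -> J K' D') ->
  (forall Y K D', J (Y :: Y :: K) D' -> J (Y :: K) D') ->
  (forall a b K D', J (And a b :: K) D' -> J (a :: b :: K) D') ->
  (forall a b K D', J (Or a b :: K) D' -> J (a :: K) D' /\ J (b :: K) D') ->
  (forall a b K D', J (Imp a b :: K) D' -> J (b :: K) D') ->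
  rule c J G0 D -> Permutation G0 (X :: X :: L) -> rule c J (X :: L) D.
Proof.
  intros HJ Hcontr Hand Hor Himp [Y K HG Hl | A HA Hr | K S HG HS] HZ.
  - rewrite HZ in HG; destruct (perm_dup_cons HG) as [[<- HK] | (M & HK & HL)].
    + apply (rule_left (X := X) (K := L)); [reflexivity|].
      apply (left_premisses_contract HJ Hcontr Hand Hor Himp); revert Hl.
      apply left_premisses_ctx; intros E d Hd; apply (HJ _ _ _ Hd); perm_solve.
    + apply (rule_left (X := Y) (K := X :: M)); [perm_solve|]; revert Hl.
      apply left_premisses_ctx; intros E d Hd.
      apply (HJ (X :: E ++ M)); [apply Hcontr, (HJ _ _ _ Hd) | ]; perm_solve.
  - apply (rule_right HA); revert Hr; apply right_premisses_ctx; intros E d Hd.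
    apply (HJ (X :: E ++ L)); [apply Hcontr, (HJ _ _ _ Hd) | ]; perm_solve.
  - rewrite HZ in HG; destruct (perm_dup_app HG) as [(M & HM & HXL) | (S' & HS' & HL)].
    + exact (rule_cond M HXL HS).
    + apply (rule_cond K (S := X :: S')); [perm_solve|].
      exact (cond_rule_contract HJ Hcontr (cond_rule_perm HS HS')).
Qed.

(** * Height-preserving admissibility of the structural rules *)

Lemma dh_axiom c n G D : axiom G D -> dh c n G D.
Proof.
  intros [(K & HK)%in_perm | (p & -> & (K & HK)%in_perm)].
  - eapply r_botL; exact HK.
  - eapply r_init; exact HK.
Qed.

Lemma dh_cond_rule {c n G K B D} :
  Permutation G (K ++ B) -> cond_rule c (dh c n) B D -> dh c (S n) G D.
Proof.
  intros HG [phi l pre ext succ sh HS HE Hcore].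
  unfold id_ext in Hcore; destruct (has_id c) eqn:Hid;
    destruct sh as [psi | psi eta theta [He1 He2] | psi D']; cbn in *;
    rewrite ?app_nil_r in Hcore.
  - eapply r_box_id with (G := K) (l := l); [exact Hid | perm_solve | exact HE | exact Hcore].
  - eapply r_dia_id with (G := K) (l := l) (phi := phi) (psi := psi);
      [exact Hid | perm_solve | exact HE | exact He1 | exact He2 | exact Hcore].
  - eapply r_boxdia_id with (G := K) (l := l) (phi := phi) (psi := psi);
      [exact Hid | perm_solve | exact HE | exact Hcore].
  - eapply r_box with (G := K) (l := l); [exact Hid | perm_solve | exact HE | exact Hcore].
  - eapply r_dia with (G := K) (l := l) (phi := phi) (psi := psi);
      [exact Hid | perm_solve | exact HE | exact He1 | exact He2 | exact Hcore].
  - eapply r_boxdia with (G := K) (l := l) (phi := phi) (psi := psi);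
      [exact Hid | perm_solve | exact HE | exact Hcore].
Qed.

Lemma dh_rule c n G D : rule c (dh c n) G D -> dh c (S n) G D.
Proof.
  intros [X K HG Hl | A -> Hr | K B HG HB]; [| |exact (dh_cond_rule HG HB)].
  - destruct X as [| | a b | a b | a b | a b |]; cbn in Hl; try contradiction.
    + eapply r_andL; eassumption.
    + destruct Hl; eapply r_orL; eassumption.
    + destruct Hl; eapply r_impL; eassumption.
    + destruct Hl as (Hc & H1 & H2); eapply r_mp_box; eassumption.
  - destruct A as [| | a b | a b | a b | a b | a b]; cbn in Hr; try contradiction.
    + destruct Hr; apply r_andR; assumption.
    + destruct Hr; [apply r_orR1 | apply r_orR2]; assumption.
    + apply r_impR; assumption.
    + destruct Hr as (Hc & H1 & H2); apply r_mp_dia; assumption.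
Qed.

Lemma dh_cases c n G D :
  dh c n G D -> axiom G D \/ exists m, n = S m /\ rule c (dh c m) G D.
Proof.
  intros Hd; destruct Hd as
    [ n G0 G' p HP | n G0 G' D HP | n G0 G' a b D HP H1 | n G' a b H1 H2
    | n G0 G' a b D HP H1 H2 | n G' a b H1 | n G' a b H1 | n G' a b H1
    | n G0 G' a b D HP H1 H2
    | n G0 G' l phi psi Hc HP HE H1 | n G0 G' l phi psi eta theta Hc HP HE He1 He2 H1
    | n G0 G' l phi psi D Hc HP HE H1 | n G0 G' l phi psi Hc HP HE H1
    | n G0 G' l phi psi eta theta Hc HP HE He1 He2 H1 | n G0 G' l phi psi D Hc HP HE H1
    | n G0 G' a b D Hc HP H1 H2 | n G' a b Hc H1 H2 ];
    try (right; exists n; split; [reflexivity|]).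
  - left; right; exists p; split; [reflexivity|]. rewrite HP; left; reflexivity.
  - left; left. rewrite HP; left; reflexivity.
  - exact (rule_left (X := And a b) HP H1).
  - exact (rule_right (A := And a b) eq_refl (conj H1 H2)).
  - exact (rule_left (X := Or a b) HP (conj H1 H2)).
  - exact (rule_right (A := Or a b) eq_refl (or_introl H1)).
  - exact (rule_right (A := Or a b) eq_refl (or_intror H1)).
  - exact (rule_right (A := Imp a b) eq_refl H1).
  - exact (rule_left (X := Imp a b) HP (conj H1 H2)).
  - apply (rule_cond G' HP).
    eapply cond_intro; [apply shape_box | apply Permutation_refl | exact HE |].
    unfold id_ext; rewrite Hc; cbn [app]; rewrite ?app_nil_r; exact H1.
  - apply (rule_cond G' (S := DiaArr phi psi :: boxes l)); [perm_solve|].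
    eapply cond_intro; [apply shape_dia, (conj He1 He2) | apply Permutation_refl | exact HE |].
    unfold id_ext; rewrite Hc; exact H1.
  - apply (rule_cond G' (S := DiaArr phi psi :: boxes l)); [perm_solve|].
    eapply cond_intro; [apply shape_boxdia | apply Permutation_refl | exact HE |].
    unfold id_ext; rewrite Hc; exact H1.
  - apply (rule_cond G' HP).
    eapply cond_intro; [apply shape_box | apply Permutation_refl | exact HE |].
    unfold id_ext; rewrite Hc; cbn [app]; rewrite ?app_nil_r; exact H1.
  - apply (rule_cond G' (S := DiaArr phi psi :: boxes l)); [perm_solve|].
    eapply cond_intro; [apply shape_dia, (conj He1 He2) | apply Permutation_refl | exact HE |].
    unfold id_ext; rewrite Hc; exact H1.
  - apply (rule_cond G' (S := DiaArr phi psi :: boxes l)); [perm_solve|].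
    eapply cond_intro; [apply shape_boxdia | apply Permutation_refl | exact HE |].
    unfold id_ext; rewrite Hc; exact H1.
  - exact (rule_left (X := BoxArr a b) HP (conj Hc (conj H1 H2))).
  - exact (rule_right (A := DiaArr a b) eq_refl (conj Hc (conj H1 H2))).
Qed.

Lemma dh_height_ind c (P : nat -> list form -> option form -> Prop) :
  (forall n G D, axiom G D -> P n G D) ->
  (forall n G D, (forall G' D', dh c n G' D' -> P n G' D') -> rule c (dh c n) G D -> P (S n) G D) ->
  forall n G D, dh c n G D -> P n G D.
Proof.
  intros Hax Hrule n; induction n as [|n IH]; intros G D [HGD | (m & Hm & Hr)]%dh_cases.
  - now apply Hax.
  - discriminate.
  - now apply Hax.
  - injection Hm as <-. now apply Hrule.
Qed.

Lemma dh_mono c n G D : dh c n G D -> dh c (S n) G D.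
Proof.
  revert n G D; apply dh_height_ind.
  - intros n G D Hax; now apply dh_axiom.
  - intros n G D IH Hr; apply dh_rule, (rule_mono IH Hr).
Qed.

Lemma dh_mono_le c n m G D : n <= m -> dh c n G D -> dh c m G D.
Proof. induction 1; auto using dh_mono. Qed.

Lemma axiom_perm G G' D : axiom G D -> Permutation G G' -> axiom G' D.
Proof.
  intros [Hb | (p & -> & Hp)] HG; [left | right; exists p; split; [reflexivity|]];
    eapply Permutation_in; eassumption.
Qed.

Lemma dh_perm c n G G' D : dh c n G D -> Permutation G G' -> dh c n G' D.
Proof.
  intros Hd; revert G'; revert n G D Hd.
  apply (dh_height_ind (fun n G D => forall G', Permutation G G' -> dh c n G' D)).
  - intros n G D Hax G' HG; apply dh_axiom; eauto using axiom_perm.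
  - intros n G D IH Hr G' HG; apply dh_rule; eauto using rule_perm.
Qed.

Lemma dh_weak c n G D phi : dh c n G D -> dh c n (phi :: G) D.
Proof.
  intros Hd; revert n G D Hd.
  apply (dh_height_ind (fun n G D => dh c n (phi :: G) D)).
  - intros n G D [Hb | (p & -> & Hp)]; apply dh_axiom; [left | right; exists p]; simpl; auto.
  - intros n G D IH Hr; apply dh_rule, rule_weak; [|exact Hr].
    intros G1 G2 D' Hd HP; exact (dh_perm (IH _ _ Hd) HP).
Qed.

Lemma dh_wR c n G phi : dh c n G None -> dh c n G (Some phi).
Proof.
  remember None as D eqn:HD; intros Hd; revert HD; revert n G D Hd.
  apply (dh_height_ind (fun n G D => D = None -> dh c n G (Some phi))).
  - intros n G D [Hb | (p & -> & Hp)] HD; [|discriminate].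
    apply dh_axiom; left; exact Hb.
  - intros n G D IH Hr HD; apply dh_rule; refine (rule_wR _ _ Hr HD).
    intros G' Hd; exact (IH _ _ Hd eq_refl).
Qed.

Definition is_connective (X : form) : Prop :=
  match X with And _ _ | Or _ _ | Imp _ _ => True | _ => False end.

Lemma dh_left_inv c X Ys : is_connective X ->
  (forall n H D, left_premisses c (dh c n) X H D -> dh c n (Ys ++ H) D) ->
  forall n G H D, dh c n G D -> Permutation G (X :: H) -> dh c n (Ys ++ H) D.
Proof.
  intros HX Hprinc n G H D Hd; revert H; revert n G D Hd.
  apply (dh_height_ind (fun n G D => forall H, Permutation G (X :: H) -> dh c n (Ys ++ H) D)).
  - intros n G D Hax H HG; apply dh_axiom.
    assert (HXH : forall Y, In Y G -> ~ is_connective Y -> In Y (Ys ++ H)).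
    { intros Y HY HY'; apply in_or_app; right.
      destruct (Permutation_in Y HG HY) as [<- | ?]; [contradiction | assumption]. }
    destruct Hax as [Hb | (p & -> & Hp)]; [left | right; exists p]; auto.
  - intros n G D IH Hr H HG.
    destruct (rule_subst (fun _ _ H => H) IH (@dh_perm c n) (@dh_perm c n) Hr HG)
      as [Hr' | [Hl | (G1 & S & _ & HS)]].
    + now apply dh_rule.
    + apply dh_mono, Hprinc, Hl.
    + destruct (cond_rule_in HS (or_introl eq_refl)) as [(a & b & ->) | (a & b & ->)];
        contradiction.
Qed.

Lemma dh_andL_inv c n a b H D : dh c n (And a b :: H) D -> dh c n (a :: b :: H) D.
Proof.
  intros Hd; apply (@dh_left_inv c (And a b) [a; b]) with (G := And a b :: H); cbn; auto.
Qed.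

Lemma dh_orL_inv c n a b H D :
  dh c n (Or a b :: H) D -> dh c n (a :: H) D /\ dh c n (b :: H) D.
Proof.
  intros Hd; split;
    [apply (@dh_left_inv c (Or a b) [a]) with (G := Or a b :: H)
    | apply (@dh_left_inv c (Or a b) [b]) with (G := Or a b :: H)]; cbn; try tauto; auto.
Qed.

Lemma dh_impL_inv c n a b H D : dh c n (Imp a b :: H) D -> dh c n (b :: H) D.
Proof.
  intros Hd; apply (@dh_left_inv c (Imp a b) [b]) with (G := Imp a b :: H); cbn; try tauto; auto.
Qed.

Lemma dh_contract c n X L D : dh c n (X :: X :: L) D -> dh c n (X :: L) D.
Proof.
  intros Hd; refine (dh_height_ind
    (fun n G D => forall X L, Permutation G (X :: X :: L) -> dh c n (X :: L) D) _ _ Hd X L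
    (Permutation_refl _)); clear n X L D Hd.
  - intros n G D Hax X L HG; apply dh_axiom.
    assert (Hin : forall Y, In Y G -> In Y (X :: L))
      by (intros Y HY; apply (Permutation_in Y HG) in HY; destruct HY; cbn; auto).
    destruct Hax as [Hb | (p & -> & Hp)]; [left | right; exists p]; auto.
  - intros n G D IH Hr X L HG; apply dh_rule.
    refine (rule_contract (@dh_perm c n) _ (@dh_andL_inv c n) (@dh_orL_inv c n)
              (@dh_impL_inv c n) Hr HG).
    intros Y K D' Hd; exact (IH _ _ Hd Y K (Permutation_refl _)).
Qed.

Lemma interderivable_mono c n m a b :
  n <= m -> interderivable (dh c n) a b -> interderivable (dh c m) a b.
Proof. intros Hnm [H1 H2]; split; eapply dh_mono_le; eassumption. Qed.

Lemma interderivable_lift c a b :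
  interderivable (der c) a b -> exists n, interderivable (dh c n) a b.
Proof.
  intros [[n1 H1] [n2 H2]]; exists (n1 + n2).
  split; eapply dh_mono_le; [| exact H1 | | exact H2]; lia.
Qed.

Lemma cond_rule_lift c S D : cond_rule c (der c) S D -> exists n, cond_rule c (dh c n) S D.
Proof.
  intros [phi l pre ext succ sh HS HE [n1 Hcore]].
  destruct (uniform_bound (fun n p => interderivable (dh c n) phi (fst p)) l) as [n2 HE2].
  - intros; eapply interderivable_mono; eassumption.
  - intros p Hp; apply interderivable_lift, HE, Hp.
  - assert (Hsh : exists n3, cond_shape (dh c n3) phi pre ext D succ).
    { destruct sh as [psi | psi eta theta Heq | psi D'];
        [exists 0; constructor | | exists 0; constructor].
      destruct (interderivable_lift Heq) as [n3 Heq3]; exists n3; constructor; exact Heq3. }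
    destruct Hsh as [n3 Hsh]; exists (n1 + n2 + n3).
    apply (cond_intro (phi := phi) (l := l) (pre := pre) (ext := ext) (succ := succ));
      [| exact HS | |].
    + destruct Hsh; constructor; eapply interderivable_mono; [| eassumption]; lia.
    + intros p Hp; eapply interderivable_mono; [| exact (HE2 p Hp)]; lia.
    + eapply dh_mono_le; [| exact Hcore]; lia.
Qed.

Lemma der_lift2 c G1 D1 G2 D2 :
  der c G1 D1 -> der c G2 D2 -> exists n, dh c n G1 D1 /\ dh c n G2 D2.
Proof.
  intros [n1 H1] [n2 H2]; exists (n1 + n2).
  split; eapply dh_mono_le; [| exact H1 | | exact H2]; lia.
Qed.

Lemma left_premisses_lift {c X K D} :
  left_premisses c (der c) X K D -> exists n, left_premisses c (dh c n) X K D.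
Proof.
  destruct X as [| | a b | a b | a b | a b |]; cbn; try tauto.
  - intros [H1 H2]; destruct (der_lift2 H1 H2) as (n & ? & ?); exists n; split; assumption.
  - intros [H1 H2]; destruct (der_lift2 H1 H2) as (n & ? & ?); exists n; split; assumption.
  - intros (Hc & H1 & H2); destruct (der_lift2 H1 H2) as (n & ? & ?); exists n; auto.
Qed.

Lemma right_premisses_lift {c G A} :
  right_premisses c (der c) G A -> exists n, right_premisses c (dh c n) G A.
Proof.
  destruct A as [| | a b | a b | a b | a b | a b]; cbn; try tauto.
  - intros [H1 H2]; destruct (der_lift2 H1 H2) as (n & ? & ?); exists n; split; assumption.
  - intros [[n H1] | [n H1]]; exists n; [left | right]; exact H1.
  - intros (Hc & H1 & H2); destruct (der_lift2 H1 H2) as (n & ? & ?); exists n; auto.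
Qed.

Lemma der_rule c G D : rule c (der c) G D -> der c G D.
Proof.
  intros [X K HG Hl | A HA Hr | K B HG HB].
  - destruct (left_premisses_lift Hl) as [n Hl']; exists (S n).
    exact (dh_rule (rule_left HG Hl')).
  - destruct (right_premisses_lift Hr) as [n Hr']; exists (S n).
    exact (dh_rule (rule_right HA Hr')).
  - destruct (cond_rule_lift HB) as [n HB']; exists (S n); exact (dh_cond_rule HG HB').
Qed.

Lemma der_axiom c G D : axiom G D -> der c G D.
Proof. intros Hax; exists 0; apply dh_axiom, Hax. Qed.

Lemma der_perm {c G G' D} : der c G D -> Permutation G G' -> der c G' D.
Proof. intros [n Hd] HG; exists n; exact (dh_perm Hd HG). Qed.

Lemma der_weak {c} K {G G' D} : der c G D -> Permutation (K ++ G) G' -> der c G' D.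
Proof.
  intros [n Hd] HG; exists n; apply (dh_perm (G := K ++ G)); [clear HG | exact HG].
  induction K as [|phi K IH]; [exact Hd | apply dh_weak, IH].
Qed.

Lemma der_wR c G phi : der c G None -> der c G (Some phi).
Proof. intros [n Hd]; exists n; apply dh_wR, Hd. Qed.

Lemma der_contract_app {c H K D} : der c (H ++ H ++ K) D -> der c (H ++ K) D.
Proof.
  revert K; induction H as [|X H IH]; intros K Hd; [exact Hd|].
  apply (der_perm (G := H ++ X :: K)); [|perm_solve].
  apply IH; destruct Hd as [n Hd]; exists n.
  apply (dh_perm (G := X :: H ++ H ++ K)); [|perm_solve].
  apply dh_contract, (dh_perm Hd); perm_solve.
Qed.

(** * Cut *)

Definition cut_for c (A : form) : Prop :=
  forall G G' D, der c G (Some A) -> der c (A :: G') D -> der c (G ++ G') D.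

Lemma cut_apply {c A G Z G' K D} : cut_for c A -> der c G (Some A) -> der c Z D ->
  Permutation Z (A :: G') -> Permutation (G ++ G') K -> der c K D.
Proof.
  intros Hcut HG HZ HP HK; apply (der_perm (G := G ++ G')); [|exact HK].
  apply Hcut; [exact HG | exact (der_perm HZ HP)].
Qed.

Lemma cut_and {c a b G K D} : cut_for c a -> cut_for c b ->
  der c G (Some a) -> der c G (Some b) -> der c (a :: b :: K) D -> der c (G ++ K) D.
Proof.
  intros Ha Hb HGa HGb HK; apply der_contract_app.
  apply (cut_apply (G' := G ++ K) Hb HGb (Z := G ++ b :: K)); [|perm_solve | reflexivity].
  apply (cut_apply (G' := b :: K) Ha HGa HK); reflexivity.
Qed.

Lemma cut_or {c a b G K D} : cut_for c a -> cut_for c b ->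
  der c G (Some a) \/ der c G (Some b) -> der c (a :: K) D -> der c (b :: K) D -> der c (G ++ K) D.
Proof. intros Ha Hb [HG | HG] HaK HbK; [apply Ha | apply Hb]; assumption. Qed.

Lemma cut_imp {c a b G K D} : cut_for c a -> cut_for c b ->
  der c (a :: G) (Some b) -> der c (G ++ K) (Some a) -> der c (b :: K) D -> der c (G ++ K) D.
Proof.
  intros Ha Hb HGb HKa HbK.
  assert (H1 : der c ((G ++ K) ++ G) (Some b)) by exact (Ha _ _ _ HKa HGb).
  apply (der_perm (G := (G ++ K) ++ [])); [|perm_solve].
  apply der_contract_app, (cut_apply (G' := K) Hb H1 HbK); [reflexivity | perm_solve].
Qed.

Lemma interderivable_trans {c x y z} : cut_for c y ->
  interderivable (der c) x y -> interderivable (der c) y z -> interderivable (der c) x z.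
Proof.
  intros Hy [Hxy Hyx] [Hyz Hzy]; split;
    [exact (Hy [x] [] _ Hxy Hyz) | exact (Hy [z] [] _ Hzy Hyx)].
Qed.

Lemma der_id_ext_cut {c x G K D} : cut_for c x -> der c G (Some x) ->
  der c (id_ext c x ++ K) D -> der c (G ++ K) D.
Proof.
  unfold id_ext; destruct (has_id c); intros Hx HG HK; [exact (Hx _ _ _ HG HK)|].
  apply (der_weak G HK); reflexivity.
Qed.

Lemma der_id_ext_subst {c x y K D} : cut_for c x -> der c [y] (Some x) ->
  der c (id_ext c x ++ K) D -> der c (id_ext c y ++ K) D.
Proof.
  unfold id_ext; destruct (has_id c); intros Hx Hy HK; [exact (Hx _ _ _ Hy HK) | exact HK].
Qed.

Lemma der_mp_boxes {c a l G D} : has_mp c = true -> cut_for c a -> der c G (Some a) ->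
  equiv_premisses (der c) a l -> incl (boxes l) G -> der c (conseqs l ++ G) D -> der c G D.
Proof.
  intros Hc Ha HGa; induction l as [|q l IH]; intros HE Hincl Hd; [exact Hd|].
  apply IH; [intros p Hp; apply HE; right; exact Hp | intros X HX; apply Hincl; right; exact HX|].
  destruct (in_perm (Hincl _ (or_introl eq_refl))) as [G1 HG1].
  apply der_rule, (rule_left (X := BoxArr (fst q) (snd q)) (K := conseqs l ++ G1)); [perm_solve|].
  split; [exact Hc | split].
  - apply (der_weak (conseqs l) (G := G ++ [])).
    + apply (Ha G [] _ HGa), HE; left; reflexivity.
    + perm_solve.
  - apply (der_perm Hd); perm_solve.
Qed.

Lemma cut_box_mp {c a b G H l K D} : has_mp c = true -> cut_for c a -> cut_for c b ->
  Permutation G (H ++ boxes l) -> equiv_premisses (der c) a l ->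
  der c (conseqs l ++ id_ext c a) (Some b) ->
  der c (G ++ K) (Some a) -> der c (G ++ b :: K) D -> der c (G ++ K) D.
Proof.
  intros Hc Ha Hb HG HE Hcore HKa HbK.
  apply (der_mp_boxes Hc Ha HKa HE).
  { intros X HX; apply in_or_app; left.
    apply (Permutation_in X (Permutation_sym HG)), in_or_app; right; exact HX. }
  assert (H1 : der c (id_ext c a ++ conseqs l ++ G ++ K) D)
    by (apply (cut_apply (G' := G ++ K) Hb Hcore HbK); perm_solve).
  apply (der_id_ext_cut Ha HKa), (der_perm (G' := (G ++ K) ++ (G ++ K) ++ conseqs l)) in H1;
    [|perm_solve].
  apply der_contract_app, (der_perm (G' := conseqs l ++ G ++ K)) in H1; [exact H1 | perm_solve].
Qed.

Lemma cut_box_cond {c a b l S D} : cut_for c a -> cut_for c b ->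
  equiv_premisses (der c) a l -> der c (conseqs l ++ id_ext c a) (Some b) ->
  cond_rule c (der c) (BoxArr a b :: S) D -> cond_rule c (der c) (boxes l ++ S) D.
Proof.
  intros Ha Hb HE Hcore [phi l1 pre ext succ sh HS HE1 Hcore1].
  destruct (box_in_cond sh HS) as (l' & Hl1 & HS').
  assert (Hphi : interderivable (der c) phi a)
    by (apply (HE1 (a, b)), (Permutation_in _ (Permutation_sym Hl1)); left; reflexivity).
  apply (cond_intro sh (l := l ++ l')); [perm_solve | |].
  - intros p [Hp | Hp]%in_app_or.
    + exact (interderivable_trans Ha Hphi (HE p Hp)).
    + apply HE1, (Permutation_in _ (Permutation_sym Hl1)); right; exact Hp.
  - assert (H1 : der c (id_ext c a ++ conseqs l ++ conseqs l' ++ id_ext c phi ++ ext) succ)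
      by (apply (cut_apply (G' := conseqs l' ++ id_ext c phi ++ ext) Hb Hcore Hcore1); perm_solve).
    apply (der_id_ext_subst Ha (proj1 Hphi)),
      (der_perm (G' := id_ext c phi ++ id_ext c phi ++ conseqs l ++ conseqs l' ++ ext)) in H1;
      [|perm_solve].
    apply (der_perm (G := id_ext c phi ++ conseqs l ++ conseqs l' ++ ext));
      [exact (der_contract_app H1) | perm_solve].
Qed.

Lemma cut_dia_mp {c eta theta G S D} : has_mp c = true -> cut_for c eta -> cut_for c theta ->
  der c G (Some eta) -> der c G (Some theta) ->
  cond_rule c (der c) (DiaArr eta theta :: S) D -> der c (G ++ S) D.
Proof.
  intros Hc Heta Htheta HGe HGt [phi l pre ext succ sh HS HE Hcore].
  destruct (dia_in_cond sh HS) as (-> & Hpre & -> & HS').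
  assert (HSe : der c (G ++ S) (Some eta)) by (apply (der_weak S HGe); perm_solve).
  assert (Hsucc : der c (G ++ S) succ).
  { apply (der_mp_boxes Hc Heta HSe HE).
    { intros X HX; apply in_or_app; right; apply (Permutation_in X (Permutation_sym HS')), HX. }
    assert (H1 : der c (id_ext c eta ++ G ++ conseqs l) succ)
      by (apply (cut_apply (G' := conseqs l ++ id_ext c eta) Htheta HGt Hcore); perm_solve).
    apply (der_weak S (G := G ++ conseqs l)); [|perm_solve].
    apply der_contract_app, (der_id_ext_cut Heta HGe H1). }
  destruct sh as [| psi eta' theta' [He1 He2] | psi D']; [discriminate Hpre | |].
  - apply der_rule, (rule_right (A := DiaArr eta' theta') eq_refl).
    split; [exact Hc | split; [| exact Hsucc]].
    apply (cut_apply (G' := []) Heta HSe He1); perm_solve.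
  - destruct D'; [apply der_wR|]; exact Hsucc.
Qed.

Lemma cut_dia_cond {c eta theta phi psi l S D} : cut_for c eta -> cut_for c theta ->
  equiv_premisses (der c) phi l -> interderivable (der c) phi eta ->
  der c (conseqs l ++ id_ext c phi ++ [psi]) (Some theta) ->
  cond_rule c (der c) (DiaArr eta theta :: S) D ->
  cond_rule c (der c) (DiaArr phi psi :: boxes l ++ S) D.
Proof.
  intros Heta Htheta HE Hphi Hcore [phi1 l1 pre ext succ sh HS HE1 Hcore1].
  destruct (dia_in_cond sh HS) as (-> & Hpre & -> & HS').
  assert (sh' : cond_shape (der c) phi [DiaArr phi psi] [psi] D succ).
  { destruct sh as [| psi' eta' theta' Heq | psi' D']; [discriminate Hpre | |].
    - apply shape_dia, (interderivable_trans Heta Hphi Heq).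
    - apply shape_boxdia. }
  apply (cond_intro sh' (l := l ++ l1)); [perm_solve | |].
  - intros p [Hp | Hp]%in_app_or; [exact (HE p Hp)|].
    exact (interderivable_trans Heta Hphi (HE1 p Hp)).
  - assert (H1 : der c (id_ext c eta ++ conseqs l ++ id_ext c phi ++ [psi] ++ conseqs l1) succ)
      by (apply (cut_apply (G' := conseqs l1 ++ id_ext c eta) Htheta Hcore Hcore1); perm_solve).
    apply (der_id_ext_subst Heta (proj1 Hphi)),
      (der_perm (G' := id_ext c phi ++ id_ext c phi ++ conseqs l ++ conseqs l1 ++ [psi])) in H1;
      [|perm_solve].
    apply (der_perm (G := id_ext c phi ++ conseqs l ++ conseqs l1 ++ [psi]));
      [exact (der_contract_app H1) | perm_solve].
Qed.

(* [G => A] is the conclusion of a rule with principal formula [A] and derivable premisses. *)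
Definition right_intro c (G : list form) (A : form) : Prop :=
  right_premisses c (der c) G A \/
  match A with
  | BoxArr a b => exists H l, Permutation G (H ++ boxes l) /\
      equiv_premisses (der c) a l /\ der c (conseqs l ++ id_ext c a) (Some b)
  | DiaArr a b => exists phi psi H l, Permutation G (H ++ DiaArr phi psi :: boxes l) /\
      equiv_premisses (der c) phi l /\ interderivable (der c) phi a /\
      der c (conseqs l ++ id_ext c phi ++ [psi]) (Some b)
  | _ => False
  end.

Definition cut_subformulas c (A : form) : Prop :=
  match A with
  | And a b | Or a b | Imp a b | BoxArr a b | DiaArr a b => cut_for c a /\ cut_for c b
  | _ => True
  end.

Lemma cut_left_premisses {c A G m G' D} : cut_subformulas c A -> right_intro c G A ->
  (forall K D', dh c m K D' -> forall K', Permutation K (A :: K') -> der c (G ++ K') D') ->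
  left_premisses c (dh c m) A G' D -> der c (G ++ G') D.
Proof.
  intros Hsub HR IH HL; destruct A as [p | | a b | a b | a b | a b | a b];
    cbn in Hsub, HR, HL; try contradiction; destruct Hsub as [Ha Hb].
  - destruct HR as [[HGa HGb] | []]; exact (cut_and Ha Hb HGa HGb (ex_intro _ m HL)).
  - destruct HR as [HR | []], HL as [H1 H2].
    exact (cut_or Ha Hb HR (ex_intro _ m H1) (ex_intro _ m H2)).
  - destruct HR as [HR | []], HL as [H1 H2].
    exact (cut_imp Ha Hb HR (IH _ _ H1 G' (Permutation_refl _)) (ex_intro _ m H2)).
  - destruct HL as (Hc & H1 & H2), HR as [[] | (H & l & HG & HE & Hcore)].
    apply (cut_box_mp Hc Ha Hb HG HE Hcore (IH _ _ H1 G' (Permutation_refl _))).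
    exact (IH _ _ H2 (b :: G') (perm_swap _ _ _)).
Qed.

Lemma cut_cond_principal {c A G} G1 {S D} : cut_subformulas c A -> right_intro c G A ->
  cond_rule c (der c) (A :: S) D -> der c (G ++ G1 ++ S) D.
Proof.
  intros Hsub HR HS.
  destruct (cond_rule_in HS (or_introl eq_refl)) as [(a & b & ->) | (a & b & ->)];
    cbn in Hsub, HR; destruct Hsub as [Ha Hb].
  - destruct HR as [[] | (H & l & HG & HE & Hcore)].
    apply der_rule, (rule_cond (H ++ G1) (S := boxes l ++ S)); [perm_solve|].
    exact (cut_box_cond Ha Hb HE Hcore HS).
  - destruct HR as [(Hc & HGa & HGb) | (phi & psi & H & l & HG & HE & Hphi & Hcore)].
    + apply (der_weak G1 (cut_dia_mp Hc Ha Hb HGa HGb HS)); perm_solve.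
    + apply der_rule, (rule_cond (H ++ G1) (S := DiaArr phi psi :: boxes l ++ S));
        [perm_solve|].
      exact (cut_dia_cond Ha Hb HE Hphi Hcore HS).
Qed.

Lemma cut_right {c A G} : cut_subformulas c A -> right_intro c G A ->
  forall m Z D, dh c m Z D -> forall G', Permutation Z (A :: G') -> der c (G ++ G') D.
Proof.
  intros Hsub HR.
  apply (dh_height_ind (fun m Z D => forall G', Permutation Z (A :: G') -> der c (G ++ G') D)).
  - intros m Z D Hax G' HZ; apply der_axiom.
    assert (Hin : forall Y, In Y Z -> (Y = Bot \/ exists p, Y = Var p) -> In Y (G ++ G')).
    { intros Y HY HYat; apply (Permutation_in Y HZ) in HY as [<- | HY].
      - destruct HYat as [-> | (p & ->)]; destruct HR as [[] | []].
      - apply in_or_app; right; exact HY. }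
    destruct Hax as [Hb | (p & -> & Hp)]; [left | right; exists p]; eauto.
  - intros m Z D IH Hr G' HZ.
    assert (Hder : forall K D', dh c m K D' -> der c K D') by (intros K D' Hd; exists m; exact Hd).
    destruct (rule_subst Hder IH (@dh_perm c m) (@der_perm c) Hr HZ)
      as [Hr' | [HL | (G1 & S & HG' & HS)]].
    + exact (der_rule Hr').
    + exact (cut_left_premisses Hsub HR IH HL).
    + apply (der_perm (cut_cond_principal G1 Hsub HR (cond_rule_mono Hder HS))); perm_solve.
Qed.

Lemma cut_left c A : cut_subformulas c A ->
  forall m G D0, dh c m G D0 -> D0 = Some A ->
  forall G' D, der c (A :: G') D -> der c (G ++ G') D.
Proof.
  intros Hsub.
  assert (Hright : forall G G' D, right_intro c G A -> der c (A :: G') D -> der c (G ++ G') D)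
    by (intros G G' D HRi [m HR]; exact (cut_right Hsub HRi HR (Permutation_refl _))).
  apply (dh_height_ind (fun m G D0 => D0 = Some A ->
           forall G' D, der c (A :: G') D -> der c (G ++ G') D)).
  - intros m G D0 [Hb | (p & -> & Hp)] HD0 G' D HR.
    + apply der_axiom; left; apply in_or_app; left; exact Hb.
    + injection HD0 as <-; destruct (in_perm Hp) as [K HK].
      apply (der_weak K HR); perm_solve.
  - intros m G D0 IH Hr HD0 G' D HR.
    assert (Hder : forall K D', dh c m K D' -> der c K D') by (intros K D' Hd; exists m; exact Hd).
    destruct Hr as [X K HG Hl | A' HA Hr | K B HG HB].
    + subst D0; apply der_rule, (rule_left (X := X) (K := K ++ G')); [perm_solve|].
      revert Hl; apply left_premisses_map.
      * intros E Hd; apply (der_perm (IH _ _ Hd eq_refl G' D HR)); perm_solve.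
      * intros E d Hd; apply (der_weak G' (Hder _ _ Hd)); perm_solve.
    + rewrite HD0 in HA; injection HA as <-.
      refine (Hright _ _ _ _ HR); left; revert Hr; apply right_premisses_ctx.
      intros E d Hd; exact (Hder _ _ Hd).
    + destruct (cond_rule_mono Hder HB) as [phi l pre ext succ sh HS HE Hcore].
      destruct sh as [psi | psi eta theta Heq | psi D']; [injection HD0 as <-.. |].
      * refine (Hright _ _ _ _ HR); right; exists K, l; split; [perm_solve|].
        split; [exact HE | rewrite app_nil_r in Hcore; exact Hcore].
      * refine (Hright _ _ _ _ HR); right; exists phi, psi, K, l; split; [perm_solve | auto].
      * apply der_rule, (rule_cond (K ++ G') (S := B)); [perm_solve|].
        eapply cond_intro; [apply shape_boxdia | eassumption..].
Qed.

Lemma cut_admissible c A : cut_for c A.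
Proof.
  induction A; intros G G' D [m HL] HR;
    refine (@cut_left c _ _ m G _ HL eq_refl G' D HR); cbn; auto.
Qed.

Theorem theorem10 : forall c : calculus,
  (* w_L height-preserving admissible *)
  (forall n G D phi, dh c n G D -> dh c n (phi :: G) D) /\
  (* w_R height-preserving admissible *)
  (forall n G phi, dh c n G None -> dh c n G (Some phi)) /\
  (* contraction height-preserving admissible *)
  (forall n G D phi, dh c n (phi :: phi :: G) D -> dh c n (phi :: G) D) /\
  (* cut admissible *)
  (forall G G' D phi, der c G (Some phi) -> der c (phi :: G') D -> der c (G ++ G') D).
Proof.
  intros c; repeat split.
  - intros n G D phi; apply dh_weak.
  - intros n G phi; apply dh_wR.
  - intros n G D phi; apply dh_contract.
  - intros G G' D phi; apply cut_admissible.
Qed.
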